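(* Fix real weights $w_A,w_B\ge 0$, rate targets $r_A,r_B\ge 0$, power budgets $P_A,P_B,P_R>0$, and dual variables $\lambda_A^{b_1},\lambda_B^{b_1},\lambda_A^{c_1},\lambda_B^{c_1},\lambda_{AB}^c,\mu_A,\mu_B\ge 0$ and $\alpha_A,\alpha_B,\alpha_R>0$ such that $w_k+\mu_k-\lambda_k^{b_1}\ge 0$ and $\xi_k:=w_k+\mu_k-\lambda_k^{c_1}-\lambda_{AB}^c\ge 0$ for $k\in\{A,B\}$. Then the maximum defining the dual function $g$ (see context) is attained at some feasible $(\boldsymbol\rho^*,\boldsymbol s^* )$ for which every entry of $\boldsymbol\rho^*$ lies in $\{0,1\}$.
   Context: Setting: users $A,B$ and relay $R$, subcarriers $n\in\{1,\dots,N\}$, nonnegative channel gains $|h_{j,j',n}|^2$ from node $j$ to node $j'$ on subcarrier $n$ ($j\neq j'\in\{A,B,R\}$). For $k\in\{A,B\}$, $k'$ denotes the other user. Per subcarrier $n$, the assignment vector is $\boldsymbol\rho_n=(\rho^a_{A,n},\rho^a_{B,n},\rho^b_{A,n,1},\rho^b_{B,n,1},\rho^b_{A,n,2},\rho^b_{B,n,2},\rho^c_{n,1},\rho^c_{n,2})\in[0,1]^8$ with sum of entries $\le 1$. Power variables (all $\ge 0$): $s^a_{k,n}$ (user $k$ direct), $s^b_{k,R,n}$ (user $k$ to relay, one-way), $s^b_{R,k,n}$ (relay forwarding user $k$'s message to $k'$, one-way), $s^c_{k,R,n}$ (user $k$ to relay, two-way), $s^c_{R,n}$ (relay broadcast,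 two-way). A pair $(\boldsymbol\rho,\boldsymbol s)$ satisfying these constraints is called feasible. Define $F(\rho,x)=\rho\log_2(1+x/\rho)$ for $\rho>0$ and $F(0,x)=0$. Rates: $D_{k,n}=F(\rho^a_{k,n},s^a_{k,n}|h_{k,k',n}|^2)$; $B^1_{k,n}=F(\rho^b_{k,n,1},s^b_{k,R,n}|h_{k,R,n}|^2)$; $B^2_{k,n}=F(\rho^b_{k,n,2},s^b_{R,k,n}|h_{R,k',n}|^2)$; $C^1_{k,n}=F(\rho^c_{n,1},s^c_{k,R,n}|h_{k,R,n}|^2)$; $C^{12}_n=F(\rho^c_{n,1},s^c_{A,R,n}|h_{A,R,n}|^2+s^c_{B,R,n}|h_{B,R,n}|^2)$; $C^2_{k,n}=F(\rho^c_{n,2},s^c_{R,n}|h_{R,k',n}|^2)$. With $\xi_k=w_k+\mu_k-\lambda_k^{c_1}-\lambda_{AB}^c$, the dual function is $g=\max_{(\boldsymbol\rho,\boldsymbol s)\text{ feasible}}\Big\{\sum_{n=1}^N\sum_{k\in\{A,B\}}\big[(w_k+\mu_k)D_{k,n}+\lambda_k^{b_1}B^1_{k,n}+(w_k+\mu_k-\lambda_k^{b_1})B^2_{k,n}+\lambda_k^{c_1}C^1_{k,n}+\xi_kC^2_{k,n}\big]+\lambda_{AB}^c\sum_{n=1}^N C^{12}_n+\sum_{k\in\{A,B\}}\alpha_k\big(P_k-\sum_{n=1}^N(s^a_{k,n}+s^b_{k,R,n}+s^c_{k,R,n})\big)+\alpha_R\big(P_R-\sum_{n=1}^N(\sum_{k\in\{A,B\}}s^b_{R,k,n}+s^c_{R,n})\big)-\sum_{k\in\{A,B\}}\mu_kr_k\Big\}$.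 *)

From Stdlib Require Import Reals List.
Import ListNotations.
Open Scope R_scope.

Inductive user := UA | UB.
Definition other (k : user) : user := match k with UA => UB | UB => UA end.
Inductive node := NA | NB | NR.
Definition nd (k : user) : node := match k with UA => NA | UB => NB end.

Definition sum_user (f : user -> R) : R := f UA + f UB.
(* sumN N f = f 0 + ... + f (N-1); subcarrier n in the paper is index n-1 here *)
Fixpoint sumN (N : nat) (f : nat -> R) : R :=
  match N with O => 0 | S m => sumN m f + f m end.

Definition log2 (x : R) : R := ln x / ln 2.
Definition F (rho x : R) : R :=
  if Req_EM_T rho 0 then 0 else rho * log2 (1 + x / rho).

Record assign := mkAssign {
  ra  : user -> R;
  rb1 : user -> R;
  rb2 : user -> R;
  rc1 : R;
  rc2 : R
}.
Definition entries (p : assign) : list R :=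
  [ra p UA; ra p UB; rb1 p UA; rb1 p UB; rb2 p UA; rb2 p UB; rc1 p; rc2 p].

Record power := mkPower {
  sa  : user -> R;
  sbR : user -> R;
  sRb : user -> R;
  scR : user -> R;
  sRc : R
}.

(* channel gains |h_{j,j',n}|^2 *)
Definition gain := node -> node -> nat -> R.

Definition feasible (N : nat) (rho : nat -> assign) (s : nat -> power) : Prop :=
  forall n, (n < N)%nat ->
    Forall (fun x => 0 <= x <= 1) (entries (rho n)) /\
    fold_right Rplus 0 (entries (rho n)) <= 1 /\
    (forall k, 0 <= sa (s n) k /\ 0 <= sbR (s n) k /\ 0 <= sRb (s n) k /\
               0 <= scR (s n) k) /\
    0 <= sRc (s n).

Section Rates.
Variables (g : gain) (rho : nat -> assign) (s : nat -> power).
Definition Dr (k : user) (n : nat) : R :=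
  F (ra (rho n) k) (sa (s n) k * g (nd k) (nd (other k)) n).
Definition B1r (k : user) (n : nat) : R :=
  F (rb1 (rho n) k) (sbR (s n) k * g (nd k) NR n).
Definition B2r (k : user) (n : nat) : R :=
  F (rb2 (rho n) k) (sRb (s n) k * g NR (nd (other k)) n).
Definition C1r (k : user) (n : nat) : R :=
  F (rc1 (rho n)) (scR (s n) k * g (nd k) NR n).
Definition C12r (n : nat) : R :=
  F (rc1 (rho n)) (scR (s n) UA * g NA NR n + scR (s n) UB * g NB NR n).
Definition C2r (k : user) (n : nat) : R :=
  F (rc2 (rho n)) (sRc (s n) * g NR (nd (other k)) n).
End Rates.

(* the Lagrangian whose maximum over feasible (rho,s) defines the dual function g *)
Definition lagr (N : nat) (g : gain)
  (w mu lb1 lc1 : user -> R) (lAB : R) (alpha : user -> R) (aR : R)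
  (P : user -> R) (PR : R) (r : user -> R)
  (rho : nat -> assign) (s : nat -> power) : R :=
  let xi k := w k + mu k - lc1 k - lAB in
  sumN N (fun n => sum_user (fun k =>
      (w k + mu k) * Dr g rho s k n + lb1 k * B1r g rho s k n
      + (w k + mu k - lb1 k) * B2r g rho s k n + lc1 k * C1r g rho s k n
      + xi k * C2r g rho s k n))
  + lAB * sumN N (fun n => C12r g rho s n)
  + sum_user (fun k => alpha k *
      (P k - sumN N (fun n => sa (s n) k + sbR (s n) k + scR (s n) k)))
  + aR * (PR - sumN N (fun n => sum_user (fun k => sRb (s n) k) + sRc (s n)))
  - sum_user (fun k => mu k * r k).

(* Up to constants, the Lagrangian is a sum over subcarriers of independent
   terms, and each subcarrier term is a sum over the eight transmission modes
   (direct A/B, one-way relaying first/second hop for A/B, two-way multiple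
   access, two-way broadcast).  The contribution of a mode with time share rho
   and powers (x, y) is the perspective rho * U(x / rho, y / rho) of a utility
   U(x, y) = weighted sum of log2(1 + gain * power) - linear power prices.
   Because the prices are positive and log2(1 + z) grows sublinearly, U tends
   to -oo and therefore attains its maximum V >= U(0, 0) = 0 on the closed
   quadrant (extreme value theorem on a box, from MathComp-Analysis).  Hence a
   subcarrier term is at most sum_m rho_m V_m <= max_m V_m, and this bound is
   reached by giving the whole subcarrier to a best mode with its optimal
   powers, i.e. at a vertex of the assignment simplex.  Choosing such a vertex
   on every subcarrier maximises the Lagrangian. *)

From Stdlib Require Import Reals List Lra Lia ClassicalEpsilon.
From mathcomp Require all_boot all_order all_algebra all_classical all_reals all_analysis.
From mathcomp Require Rstruct Rstruct_topology.
Import ListNotations.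
Open Scope R_scope.

Definition L2 (z : R) : R := log2 (1 + z).

Lemma ln2_pos : 0 < ln 2.
Proof. pose proof ln_lt_2; lra. Qed.

Lemma ln_le_mono x y : 0 < x -> x <= y -> ln x <= ln y.
Proof.
  intros Hx [Hxy | <-]; [left; apply ln_increasing |]; lra.
Qed.

(* The tangent-line bound ln t <= t - 1, from 1 + x <= exp x. *)
Lemma ln_le_sub1 t : 0 < t -> ln t <= t - 1.
Proof. intros Ht. pose proof (exp_ineq1_le (ln t)) as H. rewrite exp_ln in H; lra. Qed.

Lemma L2_0 : L2 0 = 0.
Proof. unfold L2, log2. rewrite Rplus_0_r, ln_1. unfold Rdiv. ring. Qed.

Lemma L2_nonneg z : 0 <= z -> 0 <= L2 z.
Proof.
  intros Hz. unfold L2, log2, Rdiv. apply Rmult_le_pos.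
  - rewrite <- ln_1. apply ln_le_mono; lra.
  - left. apply Rinv_0_lt_compat, ln2_pos.
Qed.

(* Subadditivity, from (1 + u)(1 + v) >= 1 + u + v; it splits the joint
   multiple-access rate into two single-user rates. *)
Lemma L2_subadd u v : 0 <= u -> 0 <= v -> L2 (u + v) <= L2 u + L2 v.
Proof.
  intros Hu Hv. unfold L2, log2, Rdiv. rewrite <- Rmult_plus_distr_r.
  apply Rmult_le_compat_r; [left; apply Rinv_0_lt_compat, ln2_pos |].
  rewrite <- ln_mult by lra. apply ln_le_mono; nra.
Qed.

Lemma L2_le_affine K u : 1 <= K -> 0 <= u -> L2 u <= log2 K + u / (K * ln 2).
Proof.
  intros HK Hu. pose proof ln2_pos.
  assert (Hsplit : ln (1 + u) = ln K + ln ((1 + u) / K)).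
  { rewrite <- ln_mult by (try apply Rdiv_lt_0_compat; lra). f_equal. field. lra. }
  assert (Hq : ln ((1 + u) / K) <= u / K).
  { eapply Rle_trans; [apply ln_le_sub1, Rdiv_lt_0_compat; lra |].
    assert ((1 + u) / K - u / K = / K) as E by (field; lra).
    assert (/ K <= 1) by (rewrite <- Rinv_1; apply Rinv_le_contravar; lra). lra. }
  replace (log2 K + u / (K * ln 2)) with ((ln K + u / K) / ln 2)
    by (unfold log2; field; lra).
  unfold L2, log2, Rdiv. rewrite Hsplit.
  apply Rmult_le_compat_r; [left; apply Rinv_0_lt_compat |]; lra.
Qed.

Lemma L2_sublinear c a e : 0 <= c -> 0 <= a -> 0 < e ->
  exists C, forall z, 0 <= z -> c * L2 (z * a) <= C + e * z.
Proof.
  intros Hc Ha He. pose proof ln2_pos.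
  set (K := 1 + c * a / (e * ln 2)).
  assert (HK : 1 <= K).
  { unfold K. assert (0 <= c * a / (e * ln 2)) by (apply Rle_mult_inv_pos; nra). lra. }
  exists (c * log2 K). intros z Hz.
  pose proof (L2_le_affine K (z * a) HK ltac:(nra)) as Hb.
  assert (Hslope : c * (z * a / (K * ln 2)) <= e * z).
  { assert (E : K * (e * ln 2) = e * ln 2 + c * a) by (unfold K; field; nra).
    apply (Rmult_le_reg_r (K * ln 2)); [nra |].
    replace (c * (z * a / (K * ln 2)) * (K * ln 2)) with (z * (c * a)) by (field; nra).
    replace (e * z * (K * ln 2)) with (z * (K * (e * ln 2))) by ring.
    rewrite E. assert (0 <= z * (e * ln 2)) by (apply Rmult_le_pos; nra). lra. }
  apply (Rmult_le_compat_l c) in Hb; lra.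
Qed.

Lemma F_zero x : F 0 x = 0.
Proof. unfold F. destruct (Req_EM_T 0 0); [reflexivity | congruence]. Qed.

Lemma F_pos r x : 0 < r -> F r x = r * L2 (x / r).
Proof. intros Hr. unfold F, L2. destruct (Req_EM_T r 0); [lra | reflexivity]. Qed.

Lemma F_one x : F 1 x = L2 x.
Proof. rewrite F_pos by lra. unfold Rdiv. rewrite Rinv_1, Rmult_1_r. ring. Qed.

(* The common shape of the per-mode utilities: weighted rates
   wx L2(x hx) + wy L2(y hy) + wxy L2(x hx + y hy) + wz L2(x hz) of two powers
   x, y, minus the linear power prices px x + py y. *)
Record utility := Utility {
  wx : R; wy : R; wxy : R; wz : R;
  hx : R; hy : R; hz : R;
  px : R; py : R
}.

Record admissible (u : utility) : Prop := {
  wx_ge0 : 0 <= wx u; wy_ge0 : 0 <= wy u; wxy_ge0 : 0 <= wxy u; wz_ge0 : 0 <= wz u;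
  hx_ge0 : 0 <= hx u; hy_ge0 : 0 <= hy u; hz_ge0 : 0 <= hz u;
  px_gt0 : 0 < px u; py_gt0 : 0 < py u
}.

Definition util (u : utility) (x y : R) : R :=
  wx u * L2 (x * hx u) + wy u * L2 (y * hy u) + wxy u * L2 (x * hx u + y * hy u)
  + wz u * L2 (x * hz u) - px u * x - py u * y.

Definition persp_util (u : utility) (rho x y : R) : R :=
  wx u * F rho (x * hx u) + wy u * F rho (y * hy u) + wxy u * F rho (x * hx u + y * hy u)
  + wz u * F rho (x * hz u) - px u * x - py u * y.

Arguments util : simpl never.
Arguments persp_util : simpl never.

Lemma util_origin u : util u 0 0 = 0.
Proof. unfold util. rewrite !Rmult_0_l, Rplus_0_l, L2_0. ring. Qed.

(* Positive prices beat the sublinear rates: the utility decreases at least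
   linearly at infinity. *)
Lemma util_coercive u : admissible u ->
  exists C e, 0 < e /\ forall x y, 0 <= x -> 0 <= y -> util u x y <= C - e * (x + y).
Proof.
  intros Hu. destruct Hu.
  set (e := Rmin (px u) (py u) / 6).
  assert (He : 0 < e) by (unfold e; pose proof (Rmin_pos (px u) (py u)); lra).
  assert (Hex : 6 * e <= px u) by (unfold e; pose proof (Rmin_l (px u) (py u)); lra).
  assert (Hey : 6 * e <= py u) by (unfold e; pose proof (Rmin_r (px u) (py u)); lra).
  destruct (L2_sublinear (wx u) (hx u) e) as [C1 H1]; auto.
  destruct (L2_sublinear (wy u) (hy u) e) as [C2 H2]; auto.
  destruct (L2_sublinear (wxy u) (hx u) e) as [C3 H3]; auto.
  destruct (L2_sublinear (wxy u) (hy u) e) as [C4 H4]; auto.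
  destruct (L2_sublinear (wz u) (hz u) e) as [C5 H5]; auto.
  exists (C1 + C2 + C3 + C4 + C5), e. split; [exact He |]. intros x y Hx Hy.
  assert (Hjoint : wxy u * L2 (x * hx u + y * hy u)
                   <= wxy u * L2 (x * hx u) + wxy u * L2 (y * hy u)).
  { rewrite <- Rmult_plus_distr_l. apply Rmult_le_compat_l; [assumption |].
    apply L2_subadd; apply Rmult_le_pos; assumption. }
  assert (6 * e * x <= px u * x) by (apply Rmult_le_compat_r; assumption).
  assert (6 * e * y <= py u * y) by (apply Rmult_le_compat_r; assumption).
  specialize (H1 x Hx); specialize (H2 y Hy); specialize (H3 x Hx);
  specialize (H4 y Hy); specialize (H5 x Hx).
  assert (0 <= e * x) by (apply Rmult_le_pos; lra).
  assert (0 <= e * y) by (apply Rmult_le_pos; lra).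
  unfold util. lra.
Qed.

Lemma util_drop_y u x y : wy u = 0 -> wxy u = 0 -> 0 <= py u -> 0 <= y ->
  util u x y <= util u x 0.
Proof. intros Hwy Hwxy Hpy Hy. unfold util. rewrite Hwy, Hwxy, !Rmult_0_l. nra. Qed.

Lemma persp_util_pos u rho x y : 0 < rho ->
  persp_util u rho x y = rho * util u (x / rho) (y / rho).
Proof.
  intros Hr. unfold persp_util, util. rewrite !F_pos by exact Hr.
  replace ((x * hx u + y * hy u) / rho) with (x / rho * hx u + y / rho * hy u) by (field; lra).
  replace (x * hx u / rho) with (x / rho * hx u) by (field; lra).
  replace (y * hy u / rho) with (y / rho * hy u) by (field; lra).
  replace (x * hz u / rho) with (x / rho * hz u) by (field; lra).
  field. lra.
Qed.

Lemma persp_util_one u x y : persp_util u 1 x y = util u x y.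
Proof. unfold persp_util, util. rewrite !F_one. reflexivity. Qed.

Lemma persp_util_zero u x y : persp_util u 0 x y = - px u * x - py u * y.
Proof. unfold persp_util. rewrite !F_zero. ring. Qed.

(* Key bound: a mode with time share rho contributes at most rho times the
   maximal utility V (at rho = 0 only the nonpositive power prices remain). *)
Lemma persp_util_le u V rho x y : 0 <= px u -> 0 <= py u ->
  (forall a b, 0 <= a -> 0 <= b -> util u a b <= V) ->
  0 <= rho -> 0 <= x -> 0 <= y -> persp_util u rho x y <= rho * V.
Proof.
  intros Hpx Hpy Hmax [Hr | <-] Hx Hy.
  - rewrite persp_util_pos by exact Hr. apply Rmult_le_compat_l; [lra |].
    apply Hmax; apply Rle_mult_inv_pos; lra.
  - rewrite persp_util_zero. nra.
Qed.

(* A function on the quadrant that attains its maximum on every box and decays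
   linearly at infinity attains its maximum on the whole quadrant: outside a
   large enough box it stays below its value at the origin. *)
Lemma coercive_max (f : R -> R -> R) C e :
  0 < e ->
  (forall M, 0 <= M -> exists x y, 0 <= x <= M /\ 0 <= y <= M /\
     forall a b, 0 <= a <= M -> 0 <= b <= M -> f a b <= f x y) ->
  (forall x y, 0 <= x -> 0 <= y -> f x y <= C - e * (x + y)) ->
  exists x y, 0 <= x /\ 0 <= y /\ forall a b, 0 <= a -> 0 <= b -> f a b <= f x y.
Proof.
  intros He Hbox Hcoer.
  set (M := Rmax 0 ((C - f 0 0) / e)).
  assert (HM : 0 <= M) by apply Rmax_l.
  assert (HeM : C - f 0 0 <= e * M).
  { replace (C - f 0 0) with (e * ((C - f 0 0) / e)) by (field; lra).
    apply Rmult_le_compat_l; [lra | apply Rmax_r]. }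
  destruct (Hbox M HM) as [x [y [Hx [Hy Hmax]]]].
  exists x, y. split; [lra | split; [lra |]].
  assert (H0 : f 0 0 <= f x y) by (apply Hmax; lra).
  intros a b Ha Hb.
  destruct (Rle_dec a M); [destruct (Rle_dec b M) |].
  - apply Hmax; lra.
  - pose proof (Hcoer a b Ha Hb). assert (e * M < e * (a + b)) by (apply Rmult_lt_compat_l; lra). lra.
  - pose proof (Hcoer a b Ha Hb). assert (e * M < e * (a + b)) by (apply Rmult_lt_compat_l; lra). lra.
Qed.

(* Extreme value theorem on a box and continuity of the utilities, from
   MathComp-Analysis.  Composing with |.| extends a utility on the quadrant to a
   continuous function on the whole plane. *)
Module BoxMaximum.
Import all_boot all_order all_algebra all_classical all_reals all_analysis.
Import Rstruct Rstruct_topology.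
Import Order.TTheory GRing.Theory Num.Theory numFieldNormedType.Exports.
Local Open Scope classical_set_scope.
Local Open Scope ring_scope.

Lemma continuous_box_max (f : R * R -> R) (M : R) : Rle 0 M ->
  (forall p : R * R, {for p, continuous f}) ->
  exists p : R * R, (Rle 0 p.1 /\ Rle p.1 M) /\ (Rle 0 p.2 /\ Rle p.2 M) /\
    forall q : R * R, Rle 0 q.1 -> Rle q.1 M -> Rle 0 q.2 -> Rle q.2 M -> Rle (f q) (f p).
Proof.
move=> /RleP M0 fc.
have box0 : (`[0, M] `*` `[0, M] : set (R * R)) !=set0.
  by exists (0, 0); split => /=; rewrite in_itv /= lexx M0.
have box_cpt : compact (`[0, M] `*` `[0, M] : set (R * R)).
  by apply: compact_setX; exact: segment_compact.
have [c cbox cmax] := compact_EVT_max box0 box_cpt (continuous_subspaceT fc).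
move: cbox; rewrite inE => -[/=]; rewrite !in_itv /= => /andP[c1 c2] /andP[c3 c4].
exists c; split; first by split; apply/RleP.
split; first by split; apply/RleP.
move=> q /RleP q1 /RleP q2 /RleP q3 /RleP q4; apply/RleP; apply: cmax.
by rewrite inE; split; rewrite /= in_itv /= ?q1 ?q2 ?q3 ?q4.
Qed.

Section PointwiseContinuity.
Variable p : R * R.

Lemma cont_plus (f g : R * R -> R) : {for p, continuous f} -> {for p, continuous g} ->
  {for p, continuous (fun q => Rplus (f q) (g q))}.
Proof. move=> Hf Hg; exact: (@continuousD R R^o _ f g p Hf Hg). Qed.

Lemma cont_minus (f g : R * R -> R) : {for p, continuous f} -> {for p, continuous g} ->
  {for p, continuous (fun q => Rminus (f q) (g q))}.
Proof. move=> Hf Hg; exact: (@continuousB R R^o _ f g p Hf Hg). Qed.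

Lemma cont_mult (f g : R * R -> R) : {for p, continuous f} -> {for p, continuous g} ->
  {for p, continuous (fun q => Rmult (f q) (g q))}.
Proof. move=> Hf Hg; exact: (@continuousM R _ f g p Hf Hg). Qed.

Lemma cont_const (c : R) : {for p, continuous (fun _ : R * R => c)}.
Proof. exact: cst_continuous. Qed.

Lemma cont_abs (f : R * R -> R) : {for p, continuous f} ->
  {for p, continuous (fun q => Rabs (f q))}.
Proof.
move=> Hf.
have -> : (fun q => Rabs (f q)) = (fun x : R => `|x|) \o f.
  by apply: funext => q /=; rewrite RabsE.
by apply: continuous_comp => //; exact: (@norm_continuous _ R^o).
Qed.

Lemma cont_L2 (f : R * R -> R) : Rle 0 (f p) -> {for p, continuous f} ->
  {for p, continuous (fun q => L2 (f q))}.
Proof.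
move=> /RleP f0 Hf.
have -> : (fun q => L2 (f q)) = (fun z : R => @exp.ln R (1 + z) * (Rpower.ln 2)^-1) \o f.
  by apply: funext => q /=; rewrite /L2 /log2 RlnE.
apply: continuous_comp => //.
apply: (@continuousM R R (@exp.ln R \o (fun z : R => 1 + z))); last exact: cst_continuous.
apply: continuous_comp; first by apply: continuousD; [exact: cst_continuous | exact: cvg_id].
by apply: continuous_ln; rewrite ltr_wpDr // ler01.
Qed.

End PointwiseContinuity.

Lemma util_abs_continuous u (p : R * R) :
  Rle 0 (hx u) -> Rle 0 (hy u) -> Rle 0 (hz u) ->
  {for p, continuous (fun q : R * R => util u (Rabs q.1) (Rabs q.2))}.
Proof.
move=> Hhx Hhy Hhz.
have cx : {for p, continuous (fun q : R * R => Rabs q.1)}.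
  by apply: cont_abs; exact: cvg_fst.
have cy : {for p, continuous (fun q : R * R => Rabs q.2)}.
  by apply: cont_abs; exact: cvg_snd.
have cx_h : forall h, {for p, continuous (fun q : R * R => Rmult (Rabs q.1) h)}.
  by move=> h; apply: cont_mult => //; exact: cont_const.
have cy_h : forall h, {for p, continuous (fun q : R * R => Rmult (Rabs q.2) h)}.
  by move=> h; apply: cont_mult => //; exact: cont_const.
have px_h : forall h, Rle 0 h -> Rle 0 (Rmult (Rabs p.1) h).
  by move=> h Hh; apply: Rmult_le_pos => //; exact: Rabs_pos.
have py_h : forall h, Rle 0 h -> Rle 0 (Rmult (Rabs p.2) h).
  by move=> h Hh; apply: Rmult_le_pos => //; exact: Rabs_pos.
rewrite /util.
apply: cont_minus; last by apply: cont_mult => //; exact: cont_const.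
apply: cont_minus; last by apply: cont_mult => //; exact: cont_const.
apply: cont_plus; last by apply: cont_mult; [exact: cont_const | apply: cont_L2; auto].
apply: cont_plus; last first.
  apply: cont_mult; first exact: cont_const.
  apply: cont_L2; first by apply: Rplus_le_le_0_compat; auto.
  exact: cont_plus.
apply: cont_plus.
  by apply: cont_mult; [exact: cont_const | apply: cont_L2; auto].
by apply: cont_mult; [exact: cont_const | apply: cont_L2; auto].
Qed.

End BoxMaximum.

Lemma util_box_max u M : admissible u -> 0 <= M ->
  exists x y, 0 <= x <= M /\ 0 <= y <= M /\
    forall a b, 0 <= a <= M -> 0 <= b <= M -> util u a b <= util u x y.
Proof.
  intros Hu HM.
  destruct (BoxMaximum.continuous_box_max
              (fun q => util u (Rabs (fst q)) (Rabs (snd q))) M HM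
              (fun p => BoxMaximum.util_abs_continuous u p
                          (hx_ge0 _ Hu) (hy_ge0 _ Hu) (hz_ge0 _ Hu)))
    as [[x y] [Hx [Hy Hmax]]].
  simpl in *. rewrite !Rabs_pos_eq in Hmax by lra.
  exists x, y. split; [lra | split; [lra |]].
  intros a b Ha Hb. specialize (Hmax (a, b)). simpl in Hmax.
  rewrite !Rabs_pos_eq in Hmax by lra. apply Hmax; lra.
Qed.

Lemma util_max u : admissible u ->
  exists x y, 0 <= x /\ 0 <= y /\ forall a b, 0 <= a -> 0 <= b -> util u a b <= util u x y.
Proof.
  intros Hu. destruct (util_coercive u Hu) as [C [e [He Hcoer]]].
  apply (coercive_max (util u) C e He); [intros M HM; apply util_box_max |]; assumption.
Qed.

Definition sum_list (l : list R) : R := fold_right Rplus 0 l.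

Lemma sum_list_le_scaled {A} (l : list A) (f c : A -> R) (V : R) :
  (forall a, In a l -> f a <= c a * V) ->
  sum_list (map f l) <= sum_list (map c l) * V.
Proof.
  induction l as [| a l IH]; intros H; simpl; [lra |].
  pose proof (H a (or_introl eq_refl)).
  assert (sum_list (map f l) <= sum_list (map c l) * V) by (apply IH; intros; apply H; right; assumption).
  lra.
Qed.

Lemma list_argmax {A} (f : A -> R) (a : A) (l : list A) :
  exists b, In b (a :: l) /\ forall c, In c (a :: l) -> f c <= f b.
Proof.
  revert a. induction l as [| a' l IH]; intros a.
  - exists a. split; [left; reflexivity |]. intros c [<- | []]. lra.
  - destruct (IH a') as [b [Hb Hmax]].
    destruct (Rle_dec (f a) (f b)).
    + exists b. split; [right; exact Hb |]. intros c [<- | Hc]; [lra | apply Hmax, Hc].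
    + exists a. split; [left; reflexivity |].
      intros c [<- | Hc]; [lra | specialize (Hmax c Hc); lra].
Qed.

Lemma sumN_ext N (f h : nat -> R) :
  (forall n, (n < N)%nat -> f n = h n) -> sumN N f = sumN N h.
Proof.
  induction N; intros H; simpl; [reflexivity |].
  rewrite IHN by (intros; apply H; lia). rewrite H by lia. reflexivity.
Qed.

Lemma sumN_le N (f h : nat -> R) :
  (forall n, (n < N)%nat -> f n <= h n) -> sumN N f <= sumN N h.
Proof.
  induction N; intros H; simpl; [lra |].
  apply Rplus_le_compat; [apply IHN; intros; apply H |apply H]; lia.
Qed.

Lemma sumN_collect N (X Y ZA ZB W : nat -> R) (l aA aB a PA PB P0 m : R) :
  sumN N X + l * sumN N Y + (aA * (PA - sumN N ZA) + aB * (PB - sumN N ZB))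
  + a * (P0 - sumN N W) - m
  = aA * PA + aB * PB + a * P0 - m
    + sumN N (fun n => X n + l * Y n - (aA * ZA n + aB * ZB n) - a * W n).
Proof.
  induction N; simpl; [ring | lra].
Qed.

(* The eight transmission modes of a subcarrier: direct transmission of user k,
   first and second hop of one-way relaying of user k's message, and the
   multiple-access and broadcast phases of two-way relaying. *)
Inductive mode := Direct (k : user) | Relay1 (k : user) | Relay2 (k : user) | Mac | Broadcast.

Definition mode_eq_dec (m m' : mode) : {m = m'} + {m <> m'}.
Proof. decide equality; decide equality. Defined.

Definition modes : list mode :=
  [Direct UA; Direct UB; Relay1 UA; Relay1 UB; Relay2 UA; Relay2 UB; Mac; Broadcast].

Lemma modes_complete m : In m modes.
Proof. destruct m as [[] | [] | [] | |]; simpl; tauto. Qed.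

(* The time share of a mode in an assignment vector, and the powers it uses.
   Single-power modes carry a dummy second power 0. *)
Definition share (p : assign) (m : mode) : R :=
  match m with
  | Direct k => ra p k | Relay1 k => rb1 p k | Relay2 k => rb2 p k
  | Mac => rc1 p | Broadcast => rc2 p
  end.

Lemma entries_share p : entries p = map (share p) modes.
Proof. reflexivity. Qed.

Definition mode_powers (q : power) (m : mode) : R * R :=
  match m with
  | Direct k => (sa q k, 0) | Relay1 k => (sbR q k, 0) | Relay2 k => (sRb q k, 0)
  | Mac => (scR q UA, scR q UB) | Broadcast => (sRc q, 0)
  end.

Definition sub_feasible (p : assign) (q : power) : Prop :=
  Forall (fun x => 0 <= x <= 1) (entries p) /\
  fold_right Rplus 0 (entries p) <= 1 /\
  (forall k, 0 <= sa q k /\ 0 <= sbR q k /\ 0 <= sRb q k /\ 0 <= scR q k) /\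
  0 <= sRc q.

Lemma sub_feasible_share p q m : sub_feasible p q -> 0 <= share p m.
Proof.
  intros [Hent _]. rewrite entries_share, Forall_forall in Hent.
  apply Hent, in_map, modes_complete.
Qed.

Lemma sub_feasible_powers p q m : sub_feasible p q ->
  0 <= fst (mode_powers q m) /\ 0 <= snd (mode_powers q m).
Proof.
  intros [_ [_ [Hq Hc]]].
  destruct m as [k | k | k | |]; simpl;
    try destruct (Hq k) as (? & ? & ? & ?);
    try destruct (Hq UA) as (? & ? & ? & ?); try destruct (Hq UB) as (? & ? & ? & ?); lra.
Qed.

Definition indicator (m m' : mode) : R := if mode_eq_dec m m' then 1 else 0.

Definition vertex (m : mode) : assign :=
  mkAssign (fun k => indicator m (Direct k)) (fun k => indicator m (Relay1 k))
           (fun k => indicator m (Relay2 k)) (indicator m Mac) (indicator m Broadcast).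

Definition vertex_power (m : mode) (z : R * R) : power :=
  let on m' v := if mode_eq_dec m m' then v else 0 in
  mkPower (fun k => on (Direct k) (fst z)) (fun k => on (Relay1 k) (fst z))
          (fun k => on (Relay2 k) (fst z))
          (fun k => on Mac (match k with UA => fst z | UB => snd z end))
          (on Broadcast (fst z)).

Lemma vertex_binary m : Forall (fun x => x = 0 \/ x = 1) (entries (vertex m)).
Proof.
  apply Forall_forall. intros x Hx.
  replace (entries (vertex m)) with (map (indicator m) modes) in Hx by reflexivity.
  apply in_map_iff in Hx as [m' [<- _]].
  unfold indicator. destruct (mode_eq_dec m m'); auto.
Qed.

Lemma vertex_feasible m z : 0 <= fst z -> 0 <= snd z -> sub_feasible (vertex m) (vertex_power m z).
Proof.
  intros Hx Hy. split; [| split; [| split]].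
  - eapply Forall_impl; [| apply vertex_binary]. simpl. intros x [-> | ->]; lra.
  - destruct m as [[] | [] | [] | |]; cbn; lra.
  - intros k. cbn. repeat split; destruct mode_eq_dec; try destruct k; lra.
  - cbn. destruct mode_eq_dec; lra.
Qed.

Section Subcarrier.
Variables (g : gain) (w mu lb1 lc1 alpha : user -> R) (lAB aR : R).

Definition xi (k : user) : R := w k + mu k - lc1 k - lAB.

(* The utility of each mode on subcarrier n: its dual-weighted rates and the
   price of the powers it consumes (user prices alpha k, relay price aR). *)
Definition mode_utility (n : nat) (m : mode) : utility :=
  match m with
  | Direct k => Utility (w k + mu k) 0 0 0 (g (nd k) (nd (other k)) n) 0 0 (alpha k) 1
  | Relay1 k => Utility (lb1 k) 0 0 0 (g (nd k) NR n) 0 0 (alpha k) 1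
  | Relay2 k => Utility (w k + mu k - lb1 k) 0 0 0 (g NR (nd (other k)) n) 0 0 aR 1
  | Mac => Utility (lc1 UA) (lc1 UB) lAB 0 (g NA NR n) (g NB NR n) 0 (alpha UA) (alpha UB)
  | Broadcast => Utility (xi UA) 0 0 (xi UB) (g NR NB n) 0 (g NR NA n) aR 1
  end.

Definition mode_term (n : nat) (p : assign) (q : power) (m : mode) : R :=
  persp_util (mode_utility n m) (share p m) (fst (mode_powers q m)) (snd (mode_powers q m)).

Definition subcarrier_term (n : nat) (p : assign) (q : power) : R :=
  sum_list (map (mode_term n p q) modes).

Lemma lagr_decomp N (P r : user -> R) (PR : R) rho s :
  lagr N g w mu lb1 lc1 lAB alpha aR P PR r rho s =
  alpha UA * P UA + alpha UB * P UB + aR * PR - sum_user (fun k => mu k * r k)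
  + sumN N (fun n => subcarrier_term n (rho n) (s n)).
Proof.
  unfold lagr. cbv zeta. unfold sum_user at 2.
  rewrite sumN_collect. f_equal. apply sumN_ext. intros n _.
  unfold subcarrier_term, mode_term, persp_util, Dr, B1r, B2r, C1r, C12r, C2r, sum_user.
  simpl. unfold xi. ring.
Qed.

(* Signs of the gains and dual variables: exactly what makes every mode
   utility admissible. *)
Hypotheses
  (Hg : forall j j' n, 0 <= g j j' n)
  (Hdirect : forall k, 0 <= w k + mu k) (Hlb : forall k, 0 <= lb1 k)
  (Hrelay : forall k, 0 <= w k + mu k - lb1 k)
  (Hlc : forall k, 0 <= lc1 k) (HAB : 0 <= lAB) (Hxi : forall k, 0 <= xi k)
  (Halpha : forall k, 0 < alpha k) (HaR : 0 < aR).

Lemma mode_admissible n m : admissible (mode_utility n m).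
Proof.
  destruct m; constructor; simpl; auto; lra.
Qed.

Lemma mode_optimum n m : exists z, 0 <= fst z /\ 0 <= snd z /\
  mode_powers (vertex_power m z) m = z /\
  forall a b, 0 <= a -> 0 <= b -> util (mode_utility n m) a b <= util (mode_utility n m) (fst z) (snd z).
Proof.
  destruct (util_max _ (mode_admissible n m)) as [x [y [Hx [Hy Hmax]]]].
  destruct m as [[] | [] | [] | |].
  7: exists (x, y); split; [exact Hx | split; [exact Hy | split; [reflexivity | exact Hmax]]].
  all: exists (x, 0); split; [exact Hx | split; [simpl; lra | split; [reflexivity |]]];
    intros a b Ha Hb; eapply Rle_trans; [apply (Hmax a b Ha Hb) | apply util_drop_y; simpl; lra].
Qed.

Lemma vertex_value n m z : subcarrier_term n (vertex m) (vertex_power m z) =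
  util (mode_utility n m) (fst (mode_powers (vertex_power m z) m)) (snd (mode_powers (vertex_power m z) m)).
Proof.
  destruct m as [[] | [] | [] | |]; unfold subcarrier_term, mode_term; simpl;
    rewrite persp_util_one, !persp_util_zero; ring.
Qed.

(* A feasible subcarrier earns at most the largest mode utility, since its
   time shares sum to at most 1. *)
Lemma subcarrier_term_le n p q V : 0 <= V ->
  (forall m a b, 0 <= a -> 0 <= b -> util (mode_utility n m) a b <= V) ->
  sub_feasible p q -> subcarrier_term n p q <= V.
Proof.
  intros HV Hmax Hpq. unfold subcarrier_term.
  eapply Rle_trans; [apply (sum_list_le_scaled _ _ (share p)) |].
  - intros m _. destruct (mode_admissible n m). destruct (sub_feasible_powers p q m Hpq).
    apply persp_util_le; try lra; [apply Hmax | apply (sub_feasible_share p q)]; assumption.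
  - destruct Hpq as [_ [Hsum _]]. rewrite entries_share in Hsum.
    apply Rmult_le_compat_r with (r := V) in Hsum; [unfold sum_list; lra | exact HV].
Qed.

Lemma subcarrier_vertex_optimum n : exists m z, 0 <= fst z /\ 0 <= snd z /\
  forall p q, sub_feasible p q -> subcarrier_term n p q <= subcarrier_term n (vertex m) (vertex_power m z).
Proof.
  destruct (choice _ (mode_optimum n)) as [zopt Hzopt].
  set (V := fun m => util (mode_utility n m) (fst (zopt m)) (snd (zopt m))).
  destruct (list_argmax V (Direct UA) (tl modes)) as [m [_ Hbest]].
  destruct (Hzopt m) as [Hx [Hy [Hrepr _]]].
  exists m, (zopt m). split; [exact Hx | split; [exact Hy |]].
  intros p q Hpq. rewrite vertex_value, Hrepr.
  apply subcarrier_term_le; [| | exact Hpq].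
  - rewrite <- (util_origin (mode_utility n m)). apply (Hzopt m); lra.
  - intros m' a b Ha Hb. eapply Rle_trans; [apply (Hzopt m'); assumption |].
    apply (Hbest m'), modes_complete.
Qed.
End Subcarrier.

Theorem proposition2 (N : nat) (g : gain)
  (w r mu lb1 lc1 alpha P : user -> R) (lAB aR PR : R) :
  (forall j j' n, 0 <= g j j' n) ->
  (forall k, 0 <= w k) -> (forall k, 0 <= r k) ->
  (forall k, 0 < P k) -> 0 < PR ->
  (forall k, 0 <= lb1 k) -> (forall k, 0 <= lc1 k) -> 0 <= lAB ->
  (forall k, 0 <= mu k) ->
  (forall k, 0 < alpha k) -> 0 < aR ->
  (forall k, 0 <= w k + mu k - lb1 k) ->
  (forall k, 0 <= w k + mu k - lc1 k - lAB) ->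
  exists (rho : nat -> assign) (s : nat -> power),
    feasible N rho s /\
    (forall n, (n < N)%nat -> Forall (fun x => x = 0 \/ x = 1) (entries (rho n))) /\
    (forall rho' s', feasible N rho' s' ->
       lagr N g w mu lb1 lc1 lAB alpha aR P PR r rho' s'
       <= lagr N g w mu lb1 lc1 lAB alpha aR P PR r rho s).
Proof.
  intros Hg Hw _ _ _ Hlb Hlc HAB Hmu Halpha HaR Hrelay Hxi.
  assert (Hdirect : forall k, 0 <= w k + mu k) by (intros k; specialize (Hw k); specialize (Hmu k); lra).
  assert (Hvertex : forall n, exists v : mode * (R * R),
    0 <= fst (snd v) /\ 0 <= snd (snd v) /\
    forall p q, sub_feasible p q -> subcarrier_term g w mu lb1 lc1 alpha lAB aR n p q
      <= subcarrier_term g w mu lb1 lc1 alpha lAB aR n (vertex (fst v)) (vertex_power (fst v) (snd v))).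
  { intros n. destruct (subcarrier_vertex_optimum g w mu lb1 lc1 alpha lAB aR
                          Hg Hdirect Hlb Hrelay Hlc HAB Hxi Halpha HaR n) as [m [z Hmz]].
    exists (m, z). exact Hmz. }
  destruct (choice _ Hvertex) as [opt Hopt].
  exists (fun n => vertex (fst (opt n))), (fun n => vertex_power (fst (opt n)) (snd (opt n))).
  split; [| split].
  - intros n _. destruct (Hopt n) as [Hx [Hy _]]. exact (vertex_feasible _ _ Hx Hy).
  - intros n _. apply vertex_binary.
  - intros rho' s' Hfeas. rewrite !lagr_decomp. apply Rplus_le_compat_l, sumN_le.
    intros n Hn. apply (Hopt n), (Hfeas n Hn).
Qed.
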